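(* For any two countable linear orders $A$ and $B$, $\mathsf{rk}(A+B)\le\max(\mathsf{rk}(A),\mathsf{rk}(B))+1$.
   Context: $A+B$ is the linear order on the disjoint union of $A$ and $B$, with the original orders on $A$ and on $B$ and $a<b$ for all $a\in A$, $b\in B$. Let $\mathcal F$ be the class of finite linear orders (language $\{<\}$); countable linear orders are the structures considered; substructures are suborders and $\mathsf{age}(X)$ is the set of finite suborders of $X$. For $A'\le B'$, $B'$ is a prime extension of $A'$ if $|B'\setminus A'|=1$; a realization of $B'$ in $X$ (where $A'\le X$) is $C\le X$ with $A'\le C$ and an order-isomorphism $B'\to C$ fixing $A'$ pointwise. For $F\in\mathsf{age}(X)$ define by recursion: $\mathsf{rk}_X(F)\ge0$ always; $\mathsf{rk}_X(F)\ge\alpha+1$ iff every prime extension $B'\in\mathcal F$ of $F$ has a realization $C$ in $X$ with $\mathsf{rk}_X(C)\ge\alpha$; for limit $\alpha$, $\mathsf{rk}_X(F)\ge\alpha$ iff $\mathsf{rk}_X(F)\ge\beta$ for all $\beta<\alpha$. $\mathsf{rk}_X(F)=\sup\{\alpha:\mathsf{rk}_X(F)\ge\alpha\}$ (or $\infty$, with $\infty+1=\infty$), and $\mathsf{rk}(X)=\mathsf{rk}_X(\emptyset)$. *)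

From Stdlib Require Import List.

Record LinOrd := {
  car :> Type;
  lt : car -> car -> Prop;
  lt_irrefl : forall x, ~ lt x x;
  lt_trans : forall x y z, lt x y -> lt y z -> lt x z;
  lt_total : forall x y, x <> y -> lt x y \/ lt y x
}.
Arguments lt {_} _ _.

Definition countable (X : LinOrd) : Prop :=
  exists f : car X -> nat, forall x y, f x = f y -> x = y.

Definition sum_lt (A B : LinOrd) (u v : car A + car B) : Prop :=
  match u, v with
  | inl a, inl a' => lt a a'
  | inr b, inr b' => lt b b'
  | inl _, inr _ => True
  | inr _, inl _ => False
  end.

Lemma sum_lt_irrefl A B : forall x, ~ sum_lt A B x x.
Proof. intros [a|b]; simpl; apply lt_irrefl. Qed.

Lemma sum_lt_trans A B : forall x y z,
  sum_lt A B x y -> sum_lt A B y z -> sum_lt A B x z.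
Proof.
  intros [a|b] [a'|b'] [a''|b'']; simpl; try tauto; apply lt_trans.
Qed.

Lemma sum_lt_total A B : forall x y, x <> y -> sum_lt A B x y \/ sum_lt A B y x.
Proof.
  intros [a|b] [a'|b'] H; simpl; auto.
  - apply lt_total; intro E; apply H; now subst.
  - apply lt_total; intro E; apply H; now subst.
Qed.

Definition lo_sum (A B : LinOrd) : LinOrd :=
  {| car := car A + car B; lt := sum_lt A B;
     lt_irrefl := sum_lt_irrefl A B; lt_trans := sum_lt_trans A B;
     lt_total := sum_lt_total A B |}.

(** Countable ordinals as Brouwer trees: zero, successor, sup of a sequence. *)
Inductive ord : Type :=
| OZ : ord
| OS : ord -> ord
| OL : (nat -> ord) -> ord.

(** max(a,b) = sup of the sequence a, b, b, ... *)
Definition omax (a b : ord) : ord :=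
  OL (fun n => match n with 0 => a | _ => b end).

(** Subsets (substructures) of X are predicates on its carrier. *)
Definition finite_sub {X : LinOrd} (F : car X -> Prop) : Prop :=
  exists l : list (car X), forall x, F x <-> In x l.

(** A prime extension B' of the finite suborder F: the set F plus one new
    point (None), with a strict linear order R whose restriction to F is the
    order of X. *)
Definition prime_ext {X : LinOrd} (F : car X -> Prop)
  (R : option {x : car X | F x} -> option {x : car X | F x} -> Prop) : Prop :=
  (forall u, ~ R u u) /\
  (forall u v w, R u v -> R v w -> R u w) /\
  (forall u v, u <> v -> R u v \/ R v u) /\
  (forall a b : {x : car X | F x}, R (Some a) (Some b) <-> lt (proj1_sig a) (proj1_sig b)).

(** A realization of the prime extension (F, R) in X: a suborder C of X
    containing F and an order isomorphism g from B' onto C fixing F pointwise. *)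
Definition realization {X : LinOrd} (F : car X -> Prop)
  (R : option {x : car X | F x} -> option {x : car X | F x} -> Prop)
  (C : car X -> Prop) (g : option {x : car X | F x} -> car X) : Prop :=
  (forall x, F x -> C x) /\
  (forall a : {x : car X | F x}, g (Some a) = proj1_sig a) /\
  (forall u v, R u v <-> lt (g u) (g v)) /\
  (forall u v, g u = g v -> u = v) /\
  (forall y, C y <-> exists u, g u = y).

Fixpoint rk_ge (X : LinOrd) (o : ord) {struct o} : (car X -> Prop) -> Prop :=
  match o with
  | OZ => fun _ => True
  | OS o' => fun F =>
      forall R, prime_ext F R ->
        exists C g, realization F R C g /\ rk_ge X o' C
  | OL f => fun F => forall n, rk_ge X (f n) F
  end.

Definition rk_ge_struct (X : LinOrd) (o : ord) : Prop :=
  rk_ge X o (fun _ => False).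

Definition rk_le (X : LinOrd) (o : ord) : Prop :=
  ~ rk_ge_struct X (OS o).

(* If rk(A+B) >= max(a,b)+2, some point z of A+B has rk({z}) >= max(a,b)+1.
   Say z lies in A; realizing a new point w below z gives rk({w,z}) >= max(a,b) >= a.
   Every prime extension of {w} in A can be placed below z, i.e. inside A, so
   rk_A({w}) >= a and hence rk(A) >= a+1.  The case z in B is the mirror image,
   obtained by reversing all orders. *)

From Stdlib Require Import ProofIrrelevance Classical.

Lemma proj1_sig_inj {T : Type} {P : T -> Prop} (a b : {x : T | P x}) :
  proj1_sig a = proj1_sig b -> a = b.
Proof. apply eq_sig_hprop; intros; apply proof_irrelevance. Qed.

Lemma lt_asym (X : LinOrd) (x y : car X) : lt x y -> ~ lt y x.
Proof. intros Hxy Hyx; exact (lt_irrefl X x (lt_trans X _ _ _ Hxy Hyx)). Qed.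

Lemma nlt_iff_gt (X : LinOrd) (x y : car X) : x <> y -> ~ lt x y <-> lt y x.
Proof.
  intros Hne; split.
  - intros Hxy; destruct (lt_total X x y Hne); tauto.
  - apply lt_asym.
Qed.

Section Simulation.

Variables X Y : LinOrd.
Variable sim : (car X -> Prop) -> (car Y -> Prop) -> Prop.

Hypothesis sim_succ : forall F G, sim F G ->
  forall R', prime_ext G R' ->
  exists R, prime_ext F R /\
    forall C g, realization F R C g ->
    exists C' g', realization G R' C' g' /\ sim C C'.

Lemma rk_ge_sim o : forall F G, sim F G -> rk_ge X o F -> rk_ge Y o G.
Proof.
  induction o as [|o IH|f IH]; intros F G HFG HF; simpl in *.
  - exact I.
  - intros R' HR'.
    destruct (sim_succ F G HFG R' HR') as (R & HR & Hlift).
    destruct (HF R HR) as (C & g & HCg & HC).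
    destruct (Hlift C g HCg) as (C' & g' & HCg' & HCC').
    exists C', g'; split; [exact HCg' | exact (IH C C' HCC' HC)].
  - intros n; exact (IH n F G HFG (HF n)).
Qed.

End Simulation.

Section PrimeExtensions.

Context {X : LinOrd} (F : car X -> Prop).

Definition cut_ext (L : car X -> Prop) (u v : option {x | F x}) : Prop :=
  match u, v with
  | Some a, Some b => lt (proj1_sig a) (proj1_sig b)
  | Some a, None => L (proj1_sig a)
  | None, Some b => ~ L (proj1_sig b)
  | None, None => False
  end.

Lemma prime_ext_cut (L : car X -> Prop) :
  (forall x y, F x -> F y -> lt x y -> L y -> L x) -> prime_ext F (cut_ext L).
Proof.
  intros Ldown; split; [|split; [|split]].
  - intros [a|]; simpl; [apply lt_irrefl | tauto].
  - intros [[x hx]|] [[y hy]|] [[z hz]|]; simpl; try tauto.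
    + apply lt_trans.
    + intros Hxy Ly; exact (Ldown _ _ hx hy Hxy Ly).
    + intros Lx nLz; apply nlt_iff_gt.
      * intros ->; contradiction.
      * intros Hzx; exact (nLz (Ldown _ _ hz hx Hzx Lx)).
    + intros nLy Hyz Lz; exact (nLy (Ldown _ _ hy hz Hyz Lz)).
  - intros [[x hx]|] [[y hy]|] Hne; simpl.
    + apply lt_total; intros E; apply Hne; f_equal; apply proj1_sig_inj, E.
    + apply classic.
    + destruct (classic (L y)); tauto.
    + contradiction.
  - intros a b; reflexivity.
Qed.

Lemma prime_ext_new_gt R : prime_ext F R ->
  forall a, R None (Some a) <-> ~ R (Some a) None.
Proof.
  intros (Rirr & Rtrans & Rtot & _) a; split.
  - intros H1 H2; exact (Rirr _ (Rtrans _ _ _ H1 H2)).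
  - intros H; destruct (Rtot None (Some a)); [discriminate | assumption | contradiction].
Qed.

Definition add_point (p : car X) (u : option {x | F x}) : car X :=
  match u with Some a => proj1_sig a | None => p end.

Lemma realization_add_point R C p : prime_ext F R -> ~ F p ->
  (forall a, R (Some a) None <-> lt (proj1_sig a) p) ->
  (forall y, C y <-> F y \/ y = p) ->
  realization F R C (add_point p).
Proof.
  intros HR nFp Rp HC.
  pose proof (prime_ext_new_gt R HR) as Rp'.
  destruct HR as (Rirr & _ & _ & RF).
  assert (Hne : forall a : {x | F x}, proj1_sig a <> p)
    by (intros a E; apply nFp; rewrite <- E; exact (proj2_sig a)).
  split; [|split; [|split; [|split]]].
  - intros y Hy; apply HC; left; exact Hy.
  - reflexivity.
  - intros [a|] [b|]; simpl.
    + apply RF.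
    + apply Rp.
    + rewrite Rp', Rp; apply nlt_iff_gt, Hne.
    + split; intros H; [destruct (Rirr _ H) | destruct (lt_irrefl _ _ H)].
  - intros [a|] [b|]; simpl; intros E.
    + f_equal; apply proj1_sig_inj, E.
    + destruct (Hne a E).
    + destruct (Hne b (eq_sym E)).
    + reflexivity.
  - intros y; rewrite HC; split.
    + intros [Hy | ->]; [exists (Some (exist _ y Hy)) | exists None]; reflexivity.
    + intros [[a|] <-]; [left; exact (proj2_sig a) | right; reflexivity].
Qed.

Section Realization.

Context {R : option {x | F x} -> option {x | F x} -> Prop}
  {C : car X -> Prop} {g : option {x | F x} -> car X}.
Hypothesis HCg : realization F R C g.

Lemma realization_new_lt a : R (Some a) None <-> lt (proj1_sig a) (g None).
Proof. destruct HCg as (_ & gF & Rg & _); rewrite Rg, gF; reflexivity. Qed.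

Lemma realization_new_gt a : R None (Some a) <-> lt (g None) (proj1_sig a).
Proof. destruct HCg as (_ & gF & Rg & _); rewrite Rg, gF; reflexivity. Qed.

Lemma realization_new_notin : ~ F (g None).
Proof.
  destruct HCg as (_ & gF & _ & ginj & _); intros h.
  discriminate (ginj (Some (exist _ _ h)) None (gF _)).
Qed.

Lemma realization_mem y : C y <-> F y \/ y = g None.
Proof.
  destruct HCg as (FC & gF & _ & _ & Cg); split.
  - intros Hy; apply Cg in Hy as [[a|] <-].
    + left; rewrite gF; exact (proj2_sig a).
    + right; reflexivity.
  - intros [Hy | ->]; [exact (FC _ Hy) | apply Cg; exists None; reflexivity].
Qed.

End Realization.

End PrimeExtensions.

Lemma rk_ge_succ_cut (X : LinOrd) o (F L : car X -> Prop) :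
  (forall x y, F x -> F y -> lt x y -> L y -> L x) ->
  rk_ge X (OS o) F ->
  exists w C, (forall y, C y <-> F y \/ y = w) /\
    (forall x, F x -> (lt x w <-> L x) /\ (lt w x <-> ~ L x)) /\
    rk_ge X o C.
Proof.
  intros Ldown HF.
  destruct (HF _ (prime_ext_cut F L Ldown)) as (C & g & HCg & HC).
  exists (g None), C; split; [|split; [|exact HC]].
  - exact (realization_mem F HCg).
  - intros x Fx; split.
    + exact (iff_sym (realization_new_lt F HCg (exist F x Fx))).
    + exact (iff_sym (realization_new_gt F HCg (exist F x Fx))).
Qed.

Lemma rk_ge_struct_succ (X : LinOrd) o :
  rk_ge_struct X (OS o) <-> exists x C, (forall y, C y <-> y = x) /\ rk_ge X o C.
Proof.
  split.
  - intros H.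
    destruct (rk_ge_succ_cut X o _ (fun _ => False) (fun _ _ _ _ _ L => L) H)
      as (x & C & HC & _ & HCo).
    exists x, C; split; [intros y; rewrite HC; tauto | exact HCo].
  - intros (x & C & HC & HCo) R HR.
    exists C, (add_point _ x); split; [|exact HCo].
    apply realization_add_point; auto.
    + intros [a []].
    + intros y; rewrite HC; tauto.
Qed.

Lemma rk_ge_succ_sup (X : LinOrd) (f : nat -> ord) n F :
  rk_ge X (OS (OL f)) F -> rk_ge X (OS (f n)) F.
Proof.
  intros HF R HR.
  destruct (HF R HR) as (C & g & HCg & HC).
  exists C, g; split; [exact HCg | exact (HC n)].
Qed.

Definition dual (X : LinOrd) : LinOrd := {|
  car := car X;
  lt := fun x y => lt y x;
  lt_irrefl := lt_irrefl X;
  lt_trans := fun x y z Hxy Hyz => lt_trans X z y x Hyz Hxy;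
  lt_total := fun x y Hne => proj1 (or_comm _ _) (lt_total X x y Hne)
|}.

Lemma prime_ext_dual (X : LinOrd) F R :
  prime_ext (X := dual X) F R <-> prime_ext (X := X) F (fun u v => R v u).
Proof.
  split; intros (Rirr & Rtrans & Rtot & RF);
    (split; [exact Rirr | split; [|split]]).
  all: try (intros u v w H1 H2; exact (Rtrans _ _ _ H2 H1)).
  all: try (intros u v Hne; destruct (Rtot u v Hne); tauto).
  all: intros a b; exact (RF b a).
Qed.

Lemma realization_dual (X : LinOrd) F R C g :
  realization (X := dual X) F R C g <-> realization (X := X) F (fun u v => R v u) C g.
Proof.
  split; intros (FC & gF & Rg & ginj & Cg);
    (split; [exact FC | split; [exact gF | split; [|split; [exact ginj | exact Cg]]]]);
    intros u v; exact (Rg v u).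
Qed.

Lemma rk_ge_dual (X : LinOrd) o F : rk_ge (dual X) o F <-> rk_ge X o F.
Proof.
  split; intros H.
  - refine (rk_ge_sim (dual X) X eq _ o F F eq_refl H).
    intros F' G' <- R' HR'; exists (fun u v => R' v u).
    split; [exact (proj2 (prime_ext_dual X F' _) HR') |].
    intros C g HCg; exists C, g.
    split; [exact (proj1 (realization_dual X F' _ C g) HCg) | reflexivity].
  - refine (rk_ge_sim X (dual X) eq _ o F F eq_refl H).
    intros F' G' <- R' HR'; exists (fun u v => R' v u).
    split; [exact (proj1 (prime_ext_dual X F' R') HR') |].
    intros C g HCg; exists C, g.
    split; [exact (proj2 (realization_dual X F' R' C g) HCg) | reflexivity].
Qed.

Section InitialSegment.

Variables X Y : LinOrd.
Variable e : car Y -> car X.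
Variable t : car X.
Hypothesis e_lt : forall y y', lt (e y) (e y') <-> lt y y'.
Hypothesis e_onto : forall x, lt x t -> exists y, e y = x.

Lemma e_inj y y' : e y = e y' -> y = y'.
Proof.
  intros E; destruct (classic (y = y')) as [|Hne]; [assumption|].
  destruct (lt_total Y y y' Hne) as [H|H]; apply e_lt in H; rewrite E in H;
    destruct (lt_irrefl _ _ H).
Qed.

Definition trace_below (F : car X -> Prop) (G : car Y -> Prop) : Prop :=
  F t /\ forall y, G y <-> F (e y) /\ lt (e y) t.

Section PullBack.

Variables (F : car X -> Prop) (G : car Y -> Prop).
Hypothesis HFG : trace_below F G.
Variable R' : option {y | G y} -> option {y | G y} -> Prop.
Hypothesis HR' : prime_ext G R'.

Definition pulled_cut (x : car X) : Prop :=
  lt x t /\ forall y (hy : G y), e y = x -> R' (Some (exist G y hy)) None.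

Lemma pulled_cut_e y (hy : G y) : pulled_cut (e y) <-> R' (Some (exist G y hy)) None.
Proof.
  split.
  - intros (_ & H); exact (H y hy eq_refl).
  - intros H; split; [exact (proj2 (proj1 (proj2 HFG y) hy)) |].
    intros y' hy' E; apply e_inj in E; subst y'.
    rewrite (proof_irrelevance _ hy' hy); exact H.
Qed.

Lemma pulled_cut_down x x' : F x -> F x' -> lt x x' -> pulled_cut x' -> pulled_cut x.
Proof.
  intros _ Fx' Hxx' (Hx't & Hx').
  split; [exact (lt_trans X _ _ _ Hxx' Hx't) |].
  intros y hy <-.
  destruct (e_onto x' Hx't) as [y' <-].
  assert (hy' : G y') by (apply HFG; split; assumption).
  destruct HR' as (_ & Rtrans & _ & RG).
  apply (Rtrans _ (Some (exist G y' hy'))).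
  - apply RG, e_lt, Hxx'.
  - exact (Hx' y' hy' eq_refl).
Qed.

Lemma pulled_realization C g :
  realization F (cut_ext F pulled_cut) C g ->
  exists C' g', realization G R' C' g' /\ trace_below C C'.
Proof.
  intros HCg.
  destruct HFG as (Ft & HG).
  (* t is not in the cut, so the new point is realized below t, i.e. inside the image of e. *)
  assert (Hpt : lt (g None) t).
  { apply (realization_new_gt F HCg (exist F t Ft)); simpl.
    intros (Htt & _); exact (lt_irrefl X t Htt). }
  destruct (e_onto _ Hpt) as [y0 Ey0].
  exists (fun y => G y \/ y = y0), (add_point G y0); split.
  - apply realization_add_point; auto.
    + intros Gy0; apply (realization_new_notin F HCg).
      rewrite <- Ey0; apply HG, Gy0.
    + intros [y hy]; simpl.
      rewrite <- pulled_cut_e, <- e_lt, Ey0.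
      exact (realization_new_lt F HCg (exist F (e y) (proj1 (proj1 (HG y) hy)))).
    + intros y; reflexivity.
  - split; [apply (realization_mem F HCg); left; exact Ft |].
    intros y; rewrite (realization_mem F HCg), HG; split.
    + intros [(Fy & Hy) | ->]; [split; [left|]; assumption |].
      split; [right |]; rewrite Ey0; [reflexivity | exact Hpt].
    + intros [[Fy | Ey] Hy]; [left; split; assumption |].
      right; apply e_inj; rewrite Ey, Ey0; reflexivity.
Qed.

End PullBack.

Lemma rk_ge_initial_segment o F G :
  F t -> (forall y, G y <-> F (e y) /\ lt (e y) t) ->
  rk_ge X o F -> rk_ge Y o G.
Proof.
  intros Ft HG.
  apply (rk_ge_sim X Y trace_below); [| split; assumption].
  intros F' G' HFG R' HR'.
  exists (cut_ext F' (pulled_cut G' R')); split.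
  - apply prime_ext_cut; intros x x'; apply (pulled_cut_down F'); assumption.
  - apply pulled_realization; assumption.
Qed.

End InitialSegment.

Lemma rk_ge_final_segment (X Y : LinOrd) (e : car Y -> car X) (t : car X) :
  (forall y y', lt (e y) (e y') <-> lt y y') ->
  (forall x, lt t x -> exists y, e y = x) ->
  forall o F G, F t -> (forall y, G y <-> F (e y) /\ lt t (e y)) ->
  rk_ge X o F -> rk_ge Y o G.
Proof.
  intros e_lt e_onto o F G Ft HG HF.
  apply rk_ge_dual.
  apply (rk_ge_initial_segment (dual X) (dual Y) e t) with (F := F); auto.
  - intros y y'; exact (e_lt y' y).
  - apply rk_ge_dual, HF.
Qed.

Lemma rk_ge_sum_inl (A B : LinOrd) o x (C : car (lo_sum A B) -> Prop) :
  (forall z, C z <-> z = inl x) -> rk_ge (lo_sum A B) (OS o) C ->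
  rk_ge_struct A (OS o).
Proof.
  intros HC HCo.
  destruct (rk_ge_succ_cut _ o C (fun _ => False) (fun _ _ _ _ _ L => L) HCo)
    as (w & D & HD & Hw & HDo).
  assert (Hwx : @lt (lo_sum A B) w (inl x)) by (apply (Hw (inl x)); [apply HC; reflexivity | tauto]).
  destruct w as [w|w]; [|destruct Hwx].
  apply rk_ge_struct_succ; exists w, (fun y => y = w); split; [reflexivity |].
  apply (rk_ge_initial_segment (lo_sum A B) A inl (inl x)) with (F := D).
  - reflexivity.
  - intros [a|b] H; [exists a; reflexivity | destruct H].
  - apply HD; left; apply HC; reflexivity.
  - intros y; rewrite HD, HC; split.
    + intros ->; split; [right; reflexivity | exact Hwx].
    + intros [[E|E] Hy]; injection E as ->; [destruct (lt_irrefl _ _ Hy) | reflexivity].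
  - exact HDo.
Qed.

Lemma rk_ge_sum_inr (A B : LinOrd) o x (C : car (lo_sum A B) -> Prop) :
  (forall z, C z <-> z = inr x) -> rk_ge (lo_sum A B) (OS o) C ->
  rk_ge_struct B (OS o).
Proof.
  intros HC HCo.
  destruct (rk_ge_succ_cut _ o C (fun _ => True) (fun _ _ _ _ _ _ => I) HCo)
    as (w & D & HD & Hw & HDo).
  assert (Hxw : @lt (lo_sum A B) (inr x) w) by (apply (Hw (inr x)); [apply HC; reflexivity | tauto]).
  destruct w as [w|w]; [destruct Hxw |].
  apply rk_ge_struct_succ; exists w, (fun y => y = w); split; [reflexivity |].
  apply (rk_ge_final_segment (lo_sum A B) B inr (inr x)) with (F := D).
  - reflexivity.
  - intros [a|b] H; [destruct H | exists b; reflexivity].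
  - apply HD; left; apply HC; reflexivity.
  - intros y; rewrite HD, HC; split.
    + intros ->; split; [right; reflexivity | exact Hxw].
    + intros [[E|E] Hy]; injection E as ->; [destruct (lt_irrefl _ _ Hy) | reflexivity].
  - exact HDo.
Qed.

Theorem proposition6p7 (A B : LinOrd) (cA : countable A) (cB : countable B)
  (a b : ord) (ha : rk_le A a) (hb : rk_le B b) :
  rk_le (lo_sum A B) (OS (omax a b)).
Proof.
  intros H.
  apply rk_ge_struct_succ in H as (z & C & HC & HCo).
  destruct z as [x|x].
  - exact (ha (rk_ge_succ_sup A _ 0 _ (rk_ge_sum_inl A B _ x C HC HCo))).
  - exact (hb (rk_ge_succ_sup B _ 1 _ (rk_ge_sum_inr A B _ x C HC HCo))).
Qed.
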